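(* Consider a constrained online convex optimization problem: $\mathcal{F}\subset\mathbb{R}^d$ is a convex set with bounded $\ell_\infty$-diameter $D_\infty=\max_{\boldsymbol{x},\boldsymbol{y}\in\mathcal{F}}\Vert\boldsymbol{x}-\boldsymbol{y}\Vert_\infty$, and $f_1,\dots,f_T$ are convex loss functions with $\Vert\nabla f_t(\boldsymbol{\theta})\Vert_\infty\le G_\infty$ for all $t\in[T]$ and $\boldsymbol{\theta}\in\mathcal{F}$. Let the iterates $\boldsymbol{\theta}_t\in\mathcal{F}$ be generated by AdaSGDMax with step size $\eta_t=\eta/\sqrt{t\hat v_t/d}$ for some $\eta>0$, and assume $\hat v_1>0$. Then the regret $R_T:=\sum_{t=1}^T f_t(\boldsymbol{\theta}_t)-\min_{\boldsymbol{\theta}^*\in\mathcal{F}}\sum_{t=1}^T f_t(\boldsymbol{\theta}^* )$ satisfies $$R_T\le \frac{D_\infty^2\sqrt{d\hat v_T T}}{2\eta}+\frac{d^{3/2}G_\infty^2\eta(2\sqrt{T}-1)}{2\sqrt{\hat v_1}}.$$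
   Context: AdaSGDMax in the online setting: with $\boldsymbol{g}_t=\nabla f_t(\boldsymbol{\theta}_t)$, $v_0=0$, $\hat v_0=0$ and a fixed $\beta_2\in[0,1)$, set $v_t=\beta_2 v_{t-1}+(1-\beta_2)\Vert\boldsymbol{g}_t\Vert_2^2$, $\hat v_t=\max\{\hat v_{t-1},v_t\}$, and $\boldsymbol{\theta}_{t+1}=\Pi_{\mathcal{F}}(\boldsymbol{\theta}_t-\eta_t\boldsymbol{g}_t)$, where $\Pi_{\mathcal{F}}(\boldsymbol{x})=\arg\min_{\boldsymbol{y}\in\mathcal{F}}\Vert\boldsymbol{x}-\boldsymbol{y}\Vert_2$ is Euclidean projection and $\boldsymbol{\theta}_1\in\mathcal{F}$. *)

From HB Require Import structures.
From mathcomp Require Import all_boot all_order all_algebra.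
From mathcomp Require Import all_classical all_reals all_analysis.
Set Implicit Arguments. Unset Strict Implicit. Unset Printing Implicit Defensive.
Import Order.TTheory GRing.Theory Num.Theory.
Import numFieldNormedType.Exports.
Local Open Scope classical_set_scope.
Local Open Scope ring_scope.

Definition grad (R : realType) (d : nat) (f : 'rV[R]_d -> R^o) (x : 'rV[R]_d)
  : 'rV[R]_d := \row_i ('d f x) (delta_mx 0 i).

Definition linf_norm (R : realType) (d : nat) (x : 'rV[R]_d) : R :=
  \big[Num.max/0]_i `|x 0 i|.

Definition l2_sq (R : realType) (d : nat) (x : 'rV[R]_d) : R :=
  \sum_i (x 0 i) ^+ 2.

(* v_0 = 0, v_t = b v_{t-1} + (1-b) s_t  (s_t = ||g_t||_2^2) *)
Fixpoint ada_v (R : realType) (b : R) (s : nat -> R) (t : nat) : R :=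
  match t with
  | 0 => 0
  | t'.+1 => b * ada_v b s t' + (1 - b) * s t'.+1
  end.

Fixpoint ada_vhat (R : realType) (b : R) (s : nat -> R) (t : nat) : R :=
  match t with
  | 0 => 0
  | t'.+1 => Num.max (ada_vhat b s t') (ada_v b s t'.+1)
  end.

From HB Require Import structures.
From mathcomp Require Import all_boot all_order all_algebra.
From mathcomp Require Import all_classical all_reals all_analysis.
From mathcomp Require Import ring lra.
Import Order.TTheory GRing.Theory Num.Theory.
Import numFieldNormedType.Exports.
Local Open Scope classical_set_scope.
Local Open Scope ring_scope.
Set Implicit Arguments. Unset Strict Implicit. Unset Printing Implicit Defensive.

(* Projected gradient descent with nonincreasing step sizes eta_t obeys Zinkevich's bound
   R_T <= D^2 / (2 eta_T) + sum_t eta_t |g_t|^2 / 2, where D^2 <= d Dinf^2 bounds the squared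
   Euclidean diameter of F: first-order convexity and the non-expansiveness of the projection
   bound each regret term by a difference of squared distances to the comparator, weighted by
   1 / (2 eta_t), and Abel summation with these nondecreasing weights collapses the sum.
   For AdaSGDMax, vhat_t is nondecreasing, so eta_t is nonincreasing and
   eta_t <= eta sqrt d / sqrt (t vhat_1); with |g_t|^2 <= d Ginf^2 and
   sum_(t <= T) 1 / sqrt t <= 2 sqrt T - 1 this yields the second term. *)

Definition convex_rV_set (R : realType) d (F : set 'rV[R]_d) :=
  forall x y, F x -> F y -> forall l : R, 0 <= l <= 1 -> F (l *: x + (1 - l) *: y).

Definition convex_on (R : realType) d (F : set 'rV[R]_d) (f : 'rV[R]_d -> R^o) :=
  forall x y, F x -> F y -> forall l : R, 0 <= l <= 1 ->
    f (l *: x + (1 - l) *: y) <= l * f x + (1 - l) * f y.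

Definition is_l2_proj (R : realType) d (F : set 'rV[R]_d) (x p : 'rV[R]_d) :=
  F p /\ forall y, F y -> l2_sq (x - p) <= l2_sq (x - y).

Definition dot (R : realType) d (u v : 'rV[R]_d) : R := \sum_i u 0 i * v 0 i.

Section Euclidean.
Variables (R : realType) (d : nat).
Implicit Types (u v : 'rV[R]_d) (c : R).

Lemma dotC u v : dot u v = dot v u.
Proof. by apply: eq_bigr => i _; rewrite mulrC. Qed.

Lemma l2_sq_ge0 u : 0 <= l2_sq u.
Proof. by apply: sumr_ge0 => i _; rewrite sqr_ge0. Qed.

Lemma l2_sqN u : l2_sq (- u) = l2_sq u.
Proof. by apply: eq_bigr => i _; rewrite mxE sqrrN. Qed.

Lemma l2_sqBZ u v c :
  l2_sq (u - c *: v) = l2_sq u - 2 * c * dot u v + c ^+ 2 * l2_sq v.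
Proof.
rewrite /l2_sq /dot !mulr_sumr -sumrN -!big_split /=; apply: eq_bigr => i _.
rewrite !mxE; ring.
Qed.

Lemma l2_sq_le_linf u D : linf_norm u <= D -> l2_sq u <= d%:R * D ^+ 2.
Proof.
move=> uD; rewrite mulr_natl -[X in _ *+ X]card_ord -sumr_const.
apply: ler_sum => i _; rewrite -real_normK ?num_real //.
have ui : `|u 0 i| <= D by rewrite (le_trans _ uD) // /linf_norm (bigD1 i) //= le_max lexx.
by rewrite ler_sqr ?nnegrE // (le_trans _ ui).
Qed.

Lemma diff_grad (f : 'rV[R]_d -> R^o) x v : 'd f x v = dot (grad f x) v.
Proof.
rewrite {1}(row_sum_delta v) linear_sum; apply: eq_bigr => i _.
by rewrite linearZ mxE /= mulrC.
Qed.

End Euclidean.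

Lemma convex_on_diff_le (R : realType) d (F : set 'rV[R]_d) (f : 'rV[R]_d -> R^o) x y :
  convex_on F f -> differentiable f x -> F x -> F y -> 'd f x (y - x) <= f y - f x.
Proof.
move=> fcvx dfx Fx Fy; rewrite -deriveE //.
have /cvg_ex[L dL] := @diff_derivable _ _ _ f x (y - x) dfx.
have dL_right : (fun h : R => h^-1 *: ((f \o shift x) (h *: (y - x)) - f x)) @ 0^'+ --> L.
  apply: cvg_trans dL => P [e e0 eP]; exists e => // z dz z0.
  by apply: eP => //; rewrite gt_eqF.
rewrite /derive (cvg_lim _ dL) //; apply: (cvgr_to_le dL_right).
near=> h.
have h0 : 0 < h by near: h; exact: nbhs_right_gt.
have h1 : h <= 1 by near: h; apply: nbhs_right_le; exact: ltr01.
rewrite /= -[_ *: _]/(h^-1 * _) ler_pdivrMl //.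
have -> : h *: (y - x) + x = h *: y + (1 - h) *: x.
  by rewrite scalerBr scalerBl scale1r -addrA (addrC (- _)).
have := fcvx y x Fy Fx h; rewrite ltW //= h1 => /(_ isT); lra.
Unshelve. all: by end_near.
Qed.

Lemma le0_of_segment_min (R : realFieldType) (B C : R) : 0 <= B ->
  (forall l, 0 <= l <= 1 -> 2 * l * C <= l ^+ 2 * B) -> C <= 0.
Proof.
move=> B0 hl; rewrite leNgt; apply/negP => C0.
have CB0 : 0 < C + B by lra.
pose l := C / (C + B).
have l0 : 0 < l by rewrite divr_gt0.
have lCB : l * (C + B) = C by rewrite mulfVK ?gt_eqF.
have /hl : 0 <= l <= 1 by rewrite ltW //= ler_pdivrMr // mul1r; lra.
(* dividing by [l > 0] leaves [2 C <= l B = C - l C < C] *)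
rewrite -mulrA expr2 -mulrA mulrCA ler_pM2l // => le2C.
have : 0 < l * C by rewrite mulr_gt0.
lra.
Qed.

Section Projection.
Variables (R : realType) (d : nat) (F : set 'rV[R]_d).
Hypothesis F_convex : convex_rV_set F.

Lemma is_l2_proj_dot_le0 x p y :
  is_l2_proj F x p -> F y -> dot (x - p) (y - p) <= 0.
Proof.
move=> [Fp pmin] Fy; apply: (le0_of_segment_min (l2_sq_ge0 (y - p))) => l l01.
have := pmin _ (F_convex Fy Fp l01).
have -> : x - (l *: y + (1 - l) *: p) = x - p - l *: (y - p).
  by apply/rowP => i; rewrite !mxE; ring.
rewrite l2_sqBZ; lra.
Qed.

Lemma is_l2_proj_le x p y :
  is_l2_proj F x p -> F y -> l2_sq (p - y) <= l2_sq (x - y).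
Proof.
move=> px Fy; have := is_l2_proj_dot_le0 px Fy.
have -> : x - y = x - p - 1 *: (y - p) by apply/rowP => i; rewrite !mxE; ring.
rewrite -[p - y]opprB l2_sqN l2_sqBZ expr1n mul1r mulr1.
have := l2_sq_ge0 (x - p); lra.
Qed.

End Projection.

Lemma convex_grad_step_le (R : realType) d (F : set 'rV[R]_d) (f : 'rV[R]_d -> R^o)
    x y e A :
  convex_on F f -> differentiable f x -> F x -> F y -> 0 < e ->
  A <= l2_sq (x - e *: grad f x - y) ->
  f x - f y <= (l2_sq (x - y) - A) / (2 * e) + e / 2 * l2_sq (grad f x).
Proof.
move=> fcvx dfx Fx Fy e0.
have := convex_on_diff_le fcvx dfx Fx Fy.
rewrite -opprB linearN diff_grad dotC => lin_le.
have -> : x - e *: grad f x - y = x - y - e *: grad f x.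
  by apply/rowP => i; rewrite !mxE; ring.
rewrite l2_sqBZ => A_le.
have -> : (l2_sq (x - y) - A) / (2 * e) + e / 2 * l2_sq (grad f x)
    = (l2_sq (x - y) - A + e ^+ 2 * l2_sq (grad f x)) / (2 * e).
  by field; rewrite gt_eqF.
rewrite ler_pdivlMr ?mulr_gt0 //.
have : (f x - f y) * (2 * e) <= dot (x - y) (grad f x) * (2 * e).
  by rewrite ler_pM2r ?mulr_gt0 //; lra.
lra.
Qed.

Lemma abel_sum_le (R : realDomainType) (w a : nat -> R) M n : (0 < n)%N ->
  (forall t, (1 <= t <= n)%N -> a t <= M) ->
  (forall t, (1 <= t < n)%N -> w t <= w t.+1) -> 0 <= w 1%N ->
  \sum_(1 <= t < n.+1) w t * (a t - a t.+1) + w n * a n.+1 <= w n * M.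
Proof.
elim: n => [//|[|n] IH] _ aM w_incr w1.
  by rewrite big_nat1 -mulrDr subrK ler_wpM2l //; apply: aM.
have IHn : \sum_(1 <= t < n.+2) w t * (a t - a t.+1) + w n.+1 * a n.+2
    <= w n.+1 * M.
  by apply: IH => // t /andP[t1 tn]; [apply: aM | apply: w_incr]; rewrite t1 ltnW.
rewrite big_nat_recr //=.
have : 0 <= (w n.+2 - w n.+1) * (M - a n.+2).
  by apply: mulr_ge0; rewrite subr_ge0; [apply: w_incr | apply: aM]; rewrite /= leqnn.
lra.
Qed.

Section ProjectedGradientDescent.
Variables (R : realType) (d T : nat) (F : set 'rV[R]_d).
Variables (f : nat -> 'rV[R]_d -> R^o) (theta : nat -> 'rV[R]_d) (eta : nat -> R).
Hypothesis F_convex : convex_rV_set F.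
Hypothesis f_convex : forall t, (1 <= t <= T)%N -> convex_on F (f t).
Hypothesis f_diff : forall t, (1 <= t <= T)%N -> forall x, F x -> differentiable (f t) x.
Hypothesis theta1_in : F (theta 1%N).
Hypothesis theta_proj : forall t, (1 <= t < T)%N ->
  is_l2_proj F (theta t - eta t *: grad (f t) (theta t)) (theta t.+1).
Hypothesis eta_gt0 : forall t, (1 <= t <= T)%N -> 0 < eta t.
Hypothesis eta_nonincr : forall t, (1 <= t < T)%N -> eta t.+1 <= eta t.

Lemma pgd_iterate_in t : (1 <= t <= T)%N -> F (theta t).
Proof. by case: t => [|[|t]] // /andP[_ tT]; case: (theta_proj (_ : 0 < t.+1 < T)%N). Qed.

Lemma pgd_regret_le (D : R) y : (0 < T)%N -> F y ->
  (forall x z, F x -> F z -> l2_sq (x - z) <= D) ->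
  \sum_(1 <= t < T.+1) (f t (theta t) - f t y)
    <= D / (2 * eta T) + \sum_(1 <= t < T.+1) eta t / 2 * l2_sq (grad (f t) (theta t)).
Proof.
move=> T_gt0 Fy diamD.
(* setting the distance after step [T] to [0] makes the last term telescope away *)
pose dist t := if (t <= T)%N then l2_sq (theta t - y) else 0.
have step t : (1 <= t <= T)%N -> f t (theta t) - f t y
    <= (2 * eta t)^-1 * (dist t - dist t.+1)
       + eta t / 2 * l2_sq (grad (f t) (theta t)).
  move=> tT; have Ft := pgd_iterate_in tT.
  rewrite mulrC {1}/dist (andP tT).2.
  apply: (convex_grad_step_le (f_convex tT) (f_diff tT Ft) Ft Fy (eta_gt0 tT)).
  rewrite /dist; case: ifP => [t1T | _]; last exact: l2_sq_ge0.
  by apply: (is_l2_proj_le F_convex (theta_proj _) Fy); rewrite (andP tT).1.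
apply: le_trans (ler_sum_nat (fun t (tT : (1 <= t < T.+1)%N) => step t tT)) _.
rewrite big_split lerD //= mulrC.
have := abel_sum_le (w := fun t => (2 * eta t)^-1) (a := dist) (M := D) T_gt0.
rewrite /dist ltnn mulr0 addr0; apply.
- by move=> t tT; rewrite (andP tT).2; apply: diamD (pgd_iterate_in tT) Fy.
- move=> t /andP[t0 tT].
  by rewrite lef_pV2 ?posrE ?mulr_gt0 ?ler_pM2l ?eta_nonincr ?eta_gt0 ?t0 ?tT ?(ltnW tT).
- by rewrite invr_ge0 ltW ?mulr_gt0 ?eta_gt0.
Qed.

End ProjectedGradientDescent.

Lemma invr_sqrt_le_sqrtB (R : rcfType) (a : R) : 0 <= a ->
  (Num.sqrt (a + 1))^-1 <= 2 * (Num.sqrt (a + 1) - Num.sqrt a).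
Proof.
move=> a0; set b := Num.sqrt (a + 1); set c := Num.sqrt a.
have b0 : 0 < b by rewrite sqrtr_gt0; lra.
have c0 : 0 <= c by exact: sqrtr_ge0.
have bc : b ^+ 2 = c ^+ 2 + 1 by rewrite !sqr_sqrtr //; lra.
(* [2 b (b - c) - 1 = (b - c)^2] *)
rewrite -[b^-1]mul1r ler_pdivrMr //; have := sqr_ge0 (b - c); nra.
Qed.

Lemma sum_inv_sqrt_le (R : rcfType) n : (0 < n)%N ->
  \sum_(1 <= t < n.+1) (Num.sqrt (t%:R : R))^-1 <= 2 * Num.sqrt n%:R - 1.
Proof.
move=> n0; rewrite big_ltn ?ltnS // sqrtr1 invr1 big_add1 /=.
have := @telescope_sumr R 1 n (fun t => Num.sqrt t%:R) n0.
rewrite sqrtr1 => telescope.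
suff : \sum_(1 <= t < n) (Num.sqrt t.+1%:R)^-1
    <= 2 * \sum_(1 <= t < n) (Num.sqrt t.+1%:R - Num.sqrt (t%:R : R)) by lra.
rewrite mulr_sumr; apply: ler_sum_nat => t _.
by rewrite -addn1 natrD invr_sqrt_le_sqrtB.
Qed.

Lemma ada_vhat_homo (R : realType) (b : R) s :
  {homo ada_vhat b s : m n / (m <= n)%N >-> m <= n}.
Proof.
apply: homo_leq => [x|y x z|n]; [exact: lexx | exact: le_trans |].
by rewrite /= le_max lexx.
Qed.

Definition adaptive_step (R : realType) (eta c : R) (v : nat -> R) (t : nat) : R :=
  eta / Num.sqrt (t%:R * v t / c).

Section AdaptiveStep.
Variables (R : realType) (eta c : R) (v : nat -> R).
Hypotheses (eta_gt0 : 0 < eta) (c_gt0 : 0 < c) (v1_gt0 : 0 < v 1%N).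
Hypothesis v_homo : {homo v : m n / (m <= n)%N >-> m <= n}.

Local Notation step := (adaptive_step eta c v).

Lemma adaptive_v_gt0 t : (0 < t)%N -> 0 < v t.
Proof. by move=> t0; apply: lt_le_trans v1_gt0 (v_homo t0). Qed.

Lemma div_sqrt_le x y : 0 < x <= y -> eta / Num.sqrt y <= eta / Num.sqrt x.
Proof.
case/andP=> x0 xy; rewrite ler_pM2l // lef_pV2 ?posrE ?sqrtr_gt0 //.
  exact: ler_wsqrtr.
exact: lt_le_trans xy.
Qed.

Lemma adaptive_step_gt0 t : (0 < t)%N -> 0 < step t.
Proof.
by move=> t0; rewrite divr_gt0 // sqrtr_gt0 divr_gt0 // mulr_gt0 ?ltr0n ?adaptive_v_gt0.
Qed.

Lemma adaptive_step_nonincr t : (0 < t)%N -> step t.+1 <= step t.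
Proof.
move=> t0; apply: div_sqrt_le.
rewrite divr_gt0 ?mulr_gt0 ?ltr0n ?adaptive_v_gt0 //= ler_pM2r ?invr_gt0 //.
by rewrite ler_pM ?ler0n ?ler_nat ?v_homo ?leqnSn // ltW ?adaptive_v_gt0.
Qed.

Lemma adaptive_step_le t : (0 < t)%N ->
  step t <= eta * Num.sqrt c / (Num.sqrt t%:R * Num.sqrt (v 1%N)).
Proof.
move=> t0; apply: (@le_trans _ _ (eta / Num.sqrt (t%:R * v 1%N / c))).
  apply: div_sqrt_le; rewrite divr_gt0 ?mulr_gt0 ?ltr0n //=.
  by rewrite ler_pM2r ?invr_gt0 // ler_pM2l ?ltr0n ?v_homo.
have [v1_ge0 c_ge0] := (ltW v1_gt0, ltW c_gt0).
by rewrite sqrtrM ?mulr_ge0 ?ler0n // sqrtrV // sqrtrM ?ler0n // invf_div mulrA.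
Qed.

Lemma div_adaptive_step t D : (0 < t)%N ->
  c * D / (2 * step t) = D * Num.sqrt (c * v t * t%:R) / (2 * eta).
Proof.
move=> t0; have arg_gt0 : 0 < t%:R * v t / c.
  by rewrite divr_gt0 ?mulr_gt0 ?ltr0n ?adaptive_v_gt0.
have -> : c * v t * t%:R = c ^+ 2 * (t%:R * v t / c) by field; rewrite gt_eqF.
rewrite sqrtrM ?sqr_ge0 // sqrtr_sqr gtr0_norm // /adaptive_step.
by field; rewrite !gt_eqF ?sqrtr_gt0.
Qed.

Lemma sum_adaptive_step_le (a : nat -> R) A T : (0 < T)%N ->
  (forall t, (1 <= t <= T)%N -> 0 <= a t <= A) ->
  \sum_(1 <= t < T.+1) step t / 2 * a t
    <= A * Num.sqrt c * eta * (2 * Num.sqrt T%:R - 1) / (2 * Num.sqrt (v 1%N)).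
Proof.
move=> T0 aA.
have A0 : 0 <= A by case/andP: (aA 1%N T0); exact: le_trans.
set K := A * Num.sqrt c * eta / (2 * Num.sqrt (v 1%N)).
have K0 : 0 <= K by rewrite divr_ge0 ?mulr_ge0 ?sqrtr_ge0 ?(ltW eta_gt0).
apply: (@le_trans _ _ (\sum_(1 <= t < T.+1) K * (Num.sqrt t%:R)^-1)).
  apply: ler_sum_nat => t /andP[t0 tT].
  have /andP[at0 atA] : 0 <= a t <= A by apply: aA; rewrite t0 -ltnS.
  apply: (@le_trans _ _ (eta * Num.sqrt c / (Num.sqrt t%:R * Num.sqrt (v 1%N)) / 2 * A)).
    apply: ler_pM => //; first by rewrite divr_ge0 // ltW // adaptive_step_gt0.
    by rewrite ler_pM2r // adaptive_step_le.
  rewrite le_eqVlt; apply/predU1P; left.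
  by rewrite /K; field; rewrite !gt_eqF ?sqrtr_gt0 ?ltr0n.
rewrite -mulr_sumr; apply: le_trans (ler_wpM2l K0 (sum_inv_sqrt_le _ T0)) _.
by rewrite /K mulrAC.
Qed.

End AdaptiveStep.

Theorem theorem3p2 (R : realType) (d T : nat)
  (F : set 'rV[R]_d) (f : nat -> 'rV[R]_d -> R^o) (theta : nat -> 'rV[R]_d)
  (Dinf Ginf eta beta2 : R) :
  (0 < T)%N ->
  (* F convex *)
  (forall x y, F x -> F y -> forall l : R, 0 <= l <= 1 ->
     F (l *: x + (1 - l) *: y)) ->
  (* l_infinity diameter of F bounded by Dinf *)
  (forall x y, F x -> F y -> linf_norm (x - y) <= Dinf) ->
  (* each f_t (t in [T]) is convex on F and differentiable on F *)
  (forall t, (1 <= t <= T)%N -> forall x y, F x -> F y ->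
     forall l : R, 0 <= l <= 1 ->
     f t (l *: x + (1 - l) *: y) <= l * f t x + (1 - l) * f t y) ->
  (forall t, (1 <= t <= T)%N -> forall x, F x -> differentiable (f t) x) ->
  (* gradient bound *)
  (forall t, (1 <= t <= T)%N -> forall x, F x ->
     linf_norm (grad (f t) x) <= Ginf) ->
  0 < eta -> 0 <= beta2 < 1 ->
  (* AdaSGDMax iterates *)
  let g := fun t => grad (f t) (theta t) in
  let vhat := ada_vhat beta2 (fun t => l2_sq (g t)) in
  let eta_t := fun t => eta / Num.sqrt (t%:R * vhat t / d%:R) in
  F (theta 1%N) ->
  (forall t, (1 <= t < T)%N ->
     F (theta t.+1) /\
     forall y, F y ->
       l2_sq (theta t - eta_t t *: g t - theta t.+1)
         <= l2_sq (theta t - eta_t t *: g t - y)) ->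
  0 < vhat 1%N ->
  forall thetastar, F thetastar ->
    \sum_(1 <= t < T.+1) f t (theta t) - \sum_(1 <= t < T.+1) f t thetastar
      <= Dinf ^+ 2 * Num.sqrt (d%:R * vhat T * T%:R) / (2 * eta)
         + d%:R * Num.sqrt d%:R * Ginf ^+ 2 * eta
             * (2 * Num.sqrt T%:R - 1) / (2 * Num.sqrt (vhat 1%N)).
Proof.
(* [beta2] only matters through the monotonicity of [vhat], which holds for every [beta2] *)
move=> T_gt0 F_convex diam f_convex f_diff g_bnd eta_gt0 _ g vhat eta_t theta1
  theta_proj vhat1_gt0 y Fy.
have d_gt0 : (0 < d)%N.
  rewrite lt0n; apply/eqP => d0; subst d; move: vhat1_gt0.
  by rewrite /vhat /= /l2_sq big_ord0 !mulr0 addr0 maxxx ltxx.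
have dR_gt0 : (0 : R) < d%:R by rewrite ltr0n.
have vhat_homo := ada_vhat_homo beta2 (fun t => l2_sq (g t)).
rewrite -sumrB; apply: le_trans (pgd_regret_le (eta := eta_t) (D := d%:R * Dinf ^+ 2)
  F_convex f_convex f_diff theta1 theta_proj _ _ T_gt0 Fy _) _.
- by move=> t /andP[t0 _]; apply: adaptive_step_gt0.
- by move=> t /andP[t0 _]; apply: adaptive_step_nonincr.
- by move=> x z Fx Fz; apply/l2_sq_le_linf/diam.
apply: lerD; first by rewrite div_adaptive_step.
rewrite [d%:R * _ * Ginf ^+ 2]mulrAC.
apply: sum_adaptive_step_le => // t tT; rewrite l2_sq_ge0 /=.
exact/l2_sq_le_linf/g_bnd/(pgd_iterate_in theta1 theta_proj).
Qed.
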